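(* An element $\bar b\in\mathcal B$ satisfies $W\bar b+\tilde P\bar b\ni0$ in $C(\mathcal X)$ if and only if $B^{-1}(\bar b)$ is supported on $\arg\min_{\mathcal X}V$.
   Context: $(\mathcal X,\mathsf d)$ compact metric space; $\varepsilon>0$; $c\in C(\mathcal X\times\mathcal X)$ symmetric, nonnegative, with $k_c:=\exp(-c/\varepsilon)$ a positive definite universal kernel, RKHS $\mathcal H_c$, Riesz map $H_c$ ($H_c[\sigma](y)=\int k_c(x,y)d\sigma(x)$ on measures; $H_c^{-1}$ on $H_c[\mathcal M(\mathcal X)]$ returns the measure); $V\in C(\mathcal X)$. $\mathcal B:=H_c[\mathcal M_+(\mathcal X)]\cap\{\|b\|_{\mathcal H_c}=1\}$; $B^{-1}(b):=b\,H_c^{-1}[b]$ (a probability measure, inverse of the embedding $B(\mu)=\exp(-f_\mu/\varepsilon)$, with $b>0$ on $\mathcal X$). For $b\in H_c[\mathcal M(\mathcal X)]$: $Vb$ pointwise product, $V^*b:=H_c[VH_c^{-1}[b]]$, $W:=\frac2\varepsilon(V-V^* )$; for $b\in H_c[\mathcal M_+(\mathcal X)]$: $\tilde Pb:=\{p\in C(\mathcal X):p\le0,\ p=0\text{ on }\operatorname{supp}H_c^{-1}[b]\}$. *)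

From HB Require Import structures.
From mathcomp Require Import all_boot all_order all_algebra.
From mathcomp Require Import all_classical all_reals all_analysis.
Set Implicit Arguments.
Unset Strict Implicit.
Unset Printing Implicit Defensive.
Import Order.TTheory GRing.Theory Num.Theory.
Import numFieldNormedType.Exports.
Local Open Scope classical_set_scope.
Local Open Scope ring_scope.

Definition borel (T : ptopologicalType) := g_sigma_algebraType (@open T).

Section defs.
Context {R : realType} {T : pseudoPMetricType R}.

Definition kc (eps : R) (c : T -> T -> R) (x y : T) : R := expR (- c x y / eps).

Definition pos_def_kernel (k : T -> T -> R) : Prop :=
  forall s : seq (R * T),
    0 <= \sum_(p <- s) \sum_(q <- s) p.1 * q.1 * k p.2 q.2.

Definition universal_kernel (k : T -> T -> R) : Prop :=
  forall f : T -> R, continuous f -> forall e : R, 0 < e ->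
    exists s : seq (R * T),
      forall y, `| f y - \sum_(p <- s) p.1 * k p.2 y | < e.

Definition Hc (eps : R) (c : T -> T -> R)
  (mu : {measure set (borel T) -> \bar R}) (y : T) : R :=
  fine (\int[mu]_x (kc eps c x y)%:E).

(* squared RKHS norm of H_c[mu]:  ||H_c mu||^2 = int int k dmu dmu *)
Definition Hc_sqnorm (eps : R) (c : T -> T -> R)
  (mu : {measure set (borel T) -> \bar R}) : \bar R :=
  \int[mu]_y (Hc eps c mu y)%:E.

(* V^* b = H_c[V H_c^{-1}[b]], with mu = H_c^{-1}[b] *)
Definition Vstar (eps : R) (c : T -> T -> R) (V : T -> R)
  (mu : {measure set (borel T) -> \bar R}) (y : T) : R :=
  fine (\int[mu]_x (kc eps c x y * V x)%:E).

(* W b = (2/eps)(V b - V^* b), with mu = H_c^{-1}[b] *)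
Definition Wop (eps : R) (c : T -> T -> R) (V : T -> R)
  (mu : {measure set (borel T) -> \bar R}) (b : T -> R) (y : T) : R :=
  2 / eps * (V y * b y - Vstar eps c V mu y).

Definition msupp (mu : {measure set (borel T) -> \bar R}) : set T :=
  [set x | forall U : set T, open U -> U x -> (0 < mu U)%E].

(* \tilde P b, with mu = H_c^{-1}[b] *)
Definition Ptilde (mu : {measure set (borel T) -> \bar R}) : set (T -> R) :=
  [set p : T -> R | continuous p /\ (forall x, p x <= 0 :> R) /\
           (forall x, msupp mu x -> p x = 0)].

(* B^{-1}(b) = b H_c^{-1}[b], the measure A |-> int_A b dmu *)
Definition Binv (mu : {measure set (borel T) -> \bar R}) (b : T -> R)
  (A : set T) : \bar R :=
  \int[mu]_(x in (A : set (borel T))) (b x)%:E.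

Definition argmin (V : T -> R) : set T := [set x | forall y, V x <= V y].

End defs.

(* Let m = V xm be the minimum of V.  Both V^* b and b = H_c[mu] are integrals
   against mu, so V^* b (y) = m b(y) + E(y) with
   E(y) = Vexcess (V xm) y = int k_c(x, y) (V x - m) dmu(x) >= 0, and E(y) = 0
   exactly when mu {V > m} = 0; hence W b = (2/eps) ((V - m) b - E).  If
   mu {V > m} = 0, then p := -W b = -(2/eps) (V - m) b is a nonpositive continuous
   function vanishing on supp mu, which lies in argmin V.  Conversely, evaluating
   W b + p = 0 at xm gives E(xm) <= 0.  Finally b > 0 (the norm condition
   excludes mu = 0), so B^{-1}(b) and mu have the same null sets. *)

From HB Require Import structures.
From mathcomp Require Import all_boot all_order all_algebra.
From mathcomp Require Import all_classical all_reals all_analysis.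
From mathcomp Require Import measurable_realfun ring lra.
Set Implicit Arguments.
Unset Strict Implicit.
Unset Printing Implicit Defensive.
Import Order.TTheory GRing.Theory Num.Theory.
Import numFieldNormedType.Exports.
Local Open Scope classical_set_scope.
Local Open Scope ring_scope.

Section joint_continuity.
Context {R : realType} {T : topologicalType}.

Lemma continuous_section (g : T -> T -> R) :
  continuous (fun p : T * T => g p.1 p.2) -> forall y, continuous (g^~ y).
Proof.
move=> cg y x.
have pair_y : (x', y) @[x' --> x] --> (x, y).
  by apply: cvg_pair; [exact: cvg_id | exact: cvg_cst].
exact: continuous_comp pair_y (cg (x, y)).
Qed.

Lemma compact_equicontinuous_sections (g : T -> T -> R) :
  compact [set: T] -> continuous (fun p : T * T => g p.1 p.2) ->
  forall y0 e, 0 < e -> \forall y \near y0, forall x, `|g x y - g x y0| < e.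
Proof.
move=> cptT cg y0 e e0.
suff : \forall y \near y0, [set: T] `<=` (fun x => `|g x y - g x y0| < e).
  by apply: filterS => y Hy x; exact: Hy.
apply: ((iffLR (compact_near_coveringP _)) cptT T (nbhs y0)
  (fun y x => `|g x y - g x y0| < e)) => // x _.
have /cvgrPdist_lt /(_ (e / 2) (divr_gt0 e0 (ltr0Sn R 1))) := cg (x, y0).
case=> -[A B] /= [nA nB] sAB; exists (A, B) => //= -[x' y] [/= Ax' By].
have /= near_y := sAB (x', y) (conj Ax' By).
have /= near_y0 := sAB (x', y0) (conj Ax' (nbhs_singleton nB)).
rewrite (_ : g x' y - g x' y0 = (g x y0 - g x' y0) - (g x y0 - g x' y)); last by ring.
by rewrite (le_lt_trans (ler_normB _ _)) // [e]splitr ltrD.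
Qed.

End joint_continuity.

Section positive_integrand.
Context d (X : measurableType d) (R : realType) (mu : {measure set X -> \bar R}).

Lemma integral_gt0_eq0P (D : set X) (f : X -> R) :
  measurable D -> measurable_fun D f -> (forall x, D x -> 0 < f x) ->
  (\int[mu]_(x in D) (f x)%:E = 0)%E <-> mu D = 0%E.
Proof.
move=> mD mf f_gt0; split=> [I0|D0]; last first.
  by apply: null_set_integral => //; exact/measurable_EFinP.
have : (\int[mu]_(x in D) `|(f x)%:E| = 0)%E.
  by rewrite -I0; apply: eq_integral => x /[!inE] Dx; rewrite gee0_abs ?lee_fin ?ltW ?f_gt0.
case/(ae_eq_integral_abs mu mD ((measurable_EFinP _ _).2 mf)) => N [mN N0 DN].
apply/eqP; rewrite -measure_le0 -N0 le_measure ?inE // => x Dx.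
by apply: DN => /(_ Dx) [] /eqP; rewrite gt_eqF ?f_gt0.
Qed.

End positive_integrand.

Section compact_integrals.
Context {R : realType} {T : pseudoPMetricType R}.

Lemma borel_open_measurable (A : set (borel T)) : open (A : set T) -> measurable A.
Proof. exact: sub_sigma_algebra. Qed.

Lemma continuous_borel_measurable (f : T -> R) :
  continuous f -> measurable_fun [set: borel T] f.
Proof.
move=> /continuousP cf.
apply: (measurability _ (RGenOpens.measurableE R)) => _ [_ [a [b ->]] <-].
by rewrite setTI; apply: borel_open_measurable; exact/cf/interval_open.
Qed.

Lemma open_gt_continuous (f : T -> R) (a : R) : continuous f -> open [set x | a < f x].
Proof.
move=> cf; have -> : [set x | a < f x] = f @^-1` [set r | a < r] by [].
by apply: (iffLR (continuousP f) cf); exact: open_gt.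
Qed.

Hypothesis cptT : compact [set: T].

Lemma continuous_bounded (f : T -> R) :
  continuous f -> exists M : R, forall x, `|f x| <= M.
Proof.
move=> cf; have cnf : continuous (fun x => `|f x|).
  by move=> x; apply: continuous_comp (cf x) (@norm_continuous _ R^o _).
have [y _ ymax] :=
  compact_EVT_max (ex_intro _ point I) cptT (continuous_subspaceT cnf).
by exists `|f y| => x; apply: ymax; rewrite inE.
Qed.

Lemma compact_argmin (V : T -> R) : continuous V -> exists xm, argmin V xm.
Proof.
move=> cV; have [xm _ xm_min] :=
  compact_EVT_min (ex_intro _ point I) cptT (continuous_subspaceT cV).
by exists xm => y; apply: xm_min; rewrite inE.
Qed.

Variable mu : {finite_measure set (borel T) -> \bar R}.

Lemma continuous_integrable (f : T -> R) :
  continuous f -> mu.-integrable [set: borel T] (EFin \o f).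
Proof.
move=> cf; have [M fM] := continuous_bounded cf.
apply: measurable_bounded_integrable => //.
- by rewrite ltey_eq fin_num_measure.
- exact: continuous_borel_measurable.
- by exists M; split; rewrite ?num_real // => y /ltW My x _; apply: le_trans (fM x) My.
Qed.

Lemma continuous_parametric_integral (g : T -> T -> R) :
  continuous (fun p : T * T => g p.1 p.2) ->
  continuous (fun y => fine (\int[mu]_x (g x y)%:E)).
Proof.
move=> cg y0; have cgy := continuous_section cg.
apply/cvgrPdist_lt => e e_gt0.
set r := fine (mu [set: borel T]).
have r_ge0 : 0 <= r by apply: fine_ge0; exact: measure_ge0.
have mu_r : mu [set: borel T] = r%:E by rewrite fineK // fin_num_measure.
have e'_gt0 : 0 < e / (r + 1) by rewrite divr_gt0 // ltr_wpDl.
apply: filterS (compact_equicontinuous_sections cptT cg y0 e'_gt0) => y gy.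
have iy0 := continuous_integrable (cgy y0); have iy := continuous_integrable (cgy y).
have cd : continuous (fun x => g x y0 - g x y).
  by move=> x; apply: continuousB; [exact: cgy | exact: cgy].
rewrite -fineB ?integrable_fin_num // -integralB_EFin //.
under eq_integral do rewrite -EFinB.
have idf := integrable_fin_num measurableT (continuous_integrable cd).
rewrite -fine_abse // -lte_fin fineK ?abse_fin_num //.
apply: le_lt_trans (le_abse_integral _ _ _) _ => //.
  by apply/measurable_EFinP; exact: continuous_borel_measurable.
apply: (@le_lt_trans _ _ (\int[mu]_x (e / (r + 1))%:E)%E).
  apply: ge0_le_integral => //.
  - apply/measurable_EFinP; apply: measurableT_comp; first exact: normr_measurable.
    exact: continuous_borel_measurable.
  - by move=> x _; rewrite lee_fin -opprB normrN ltW.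
rewrite (integral_cst mu measurableT (e / (r + 1))%:E) /= mu_r -EFinM lte_fin.
by rewrite mulrAC ltr_pdivrMr ?ltr_wpDl //; nra.
Qed.

End compact_integrals.

Lemma argminC {R : realType} {T : pseudoPMetricType R} (V : T -> R) (xm : T) :
  argmin V xm -> ~` argmin V = [set x | V xm < V x].
Proof.
move=> xm_min; apply/seteqP; split=> x /=.
- move=> x_notmin; rewrite ltNge; apply/negP => Vx; apply: x_notmin => y.
  exact: le_trans Vx (xm_min y).
- by move=> Vxm_lt x_min; have := x_min xm; rewrite leNgt Vxm_lt.
Qed.

Section gibbs_kernel.
Context {R : realType} {T : pseudoPMetricType R}.
Variables (eps : R) (c : T -> T -> R) (V : T -> R).
Hypotheses (cont_c : continuous (fun p : T * T => c p.1 p.2)) (cont_V : continuous V).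

Lemma kc_gt0 x y : 0 < kc eps c x y.
Proof. exact: expR_gt0. Qed.

Lemma continuous_kc : continuous (fun p : T * T => kc eps c p.1 p.2).
Proof.
move=> p; apply: (@continuous_comp _ _ _ (fun p : T * T => - c p.1 p.2 / eps) expR);
  last exact: continuous_expR.
by apply: cvgM; [apply: cvgN; exact: cont_c | exact: cvg_cst].
Qed.

Lemma continuous_kc_weighted (f : T -> R) : continuous f ->
  continuous (fun p : T * T => kc eps c p.1 p.2 * f p.1).
Proof.
move=> cf p; apply: cvgM; first exact: continuous_kc.
by apply: continuous_comp (cf _); exact: cvg_fst.
Qed.

Hypothesis cptT : compact [set: T].
Variable mu : {finite_measure set (borel T) -> \bar R}.

Lemma continuous_Hc : continuous (Hc eps c mu).
Proof. exact: continuous_parametric_integral continuous_kc. Qed.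

Lemma continuous_Wop : continuous (Wop eps c V mu (Hc eps c mu)).
Proof.
have cVstar : continuous (Vstar eps c V mu).
  exact: continuous_parametric_integral (continuous_kc_weighted cont_V).
move=> y; rewrite /Wop.
apply: (@continuousM _ _ (fun=> 2 / eps)
  (fun y => V y * Hc eps c mu y - Vstar eps c V mu y)); first exact: cst_continuous.
apply: (@continuousB _ R^o T (fun y => V y * Hc eps c mu y)); last exact: cVstar.
apply: continuousM; [exact: cont_V | exact: continuous_Hc].
Qed.

Lemma integrable_kc_weighted (f : T -> R) y : continuous f ->
  mu.-integrable [set: borel T] (fun x => (kc eps c x y * f x)%:E).
Proof.
move=> cf; apply: continuous_integrable => //.
exact: (@continuous_section _ _ (fun x y => kc eps c x y * f x) (continuous_kc_weighted cf)).
Qed.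

(* The norm condition only serves to rule out [mu = 0]. *)
Lemma Hc_gt0 : Hc_sqnorm eps c mu = 1%E -> forall y, 0 < Hc eps c mu y.
Proof.
move=> norm1 y.
have mu_neq0 : mu [set: borel T] != 0%E.
  apply: contraPneq norm1 => mu0; rewrite /Hc_sqnorm null_set_integral //.
    by move=> /eqP; rewrite eq_sym eqe oner_eq0.
  by apply/measurable_EFinP; exact: continuous_borel_measurable continuous_Hc.
have ck : continuous (fun x => kc eps c x y).
  exact: (@continuous_section _ _ (kc eps c) continuous_kc).
have ik := continuous_integrable cptT mu ck.
have I_neq0 : (\int[mu]_x (kc eps c x y)%:E)%E != 0.
  apply: contra mu_neq0 => /eqP /integral_gt0_eq0P -> //.
  + exact: continuous_borel_measurable ck.
  + by move=> x _; exact: kc_gt0.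
have I_ge0 : (0 <= \int[mu]_x (kc eps c x y)%:E)%E.
  by apply: integral_ge0 => x _; rewrite lee_fin ltW ?kc_gt0.
by rewrite /Hc fine_gt0 // lt0e I_neq0 I_ge0 ltey_eq integrable_fin_num.
Qed.

Definition Vexcess (m : R) (y : T) : R :=
  fine (\int[mu]_x (kc eps c x y * (V x - m))%:E).

Lemma Vstar_decomp m y : Vstar eps c V mu y = m * Hc eps c mu y + Vexcess m y.
Proof.
have ikV := integrable_kc_weighted y cont_V.
have ikm := integrable_kc_weighted y (@cst_continuous _ _ m).
have ik :=
  continuous_integrable cptT mu (@continuous_section _ _ (kc eps c) continuous_kc y).
have -> : Vexcess m y = Vstar eps c V mu y - fine (\int[mu]_x (kc eps c x y * m)%:E).
  rewrite /Vexcess /Vstar -fineB ?integrable_fin_num // -integralB_EFin //.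
  by congr fine; apply: eq_integral => x _; rewrite -EFinB mulrBr.
have -> : (\int[mu]_x (kc eps c x y * m)%:E = (\int[mu]_x (kc eps c x y)%:E) * m%:E)%E.
  by under eq_integral do rewrite EFinM; exact: integralZr.
by rewrite fineM ?integrable_fin_num // /Hc /=; ring.
Qed.

Lemma Wop_decomp m y : Wop eps c V mu (Hc eps c mu) y =
  2 / eps * ((V y - m) * Hc eps c mu y - Vexcess m y).
Proof. by rewrite /Wop (Vstar_decomp m); congr (_ * _); ring. Qed.

Section at_minimum.
Variable xm : T.
Hypothesis xm_min : argmin V xm.

Lemma Vexcess_ge0 y : 0 <= Vexcess (V xm) y.
Proof.
apply: fine_ge0; apply: integral_ge0 => x _.
by rewrite lee_fin mulr_ge0 ?subr_ge0 ?xm_min // ltW ?kc_gt0.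
Qed.

Lemma Vexcess_eq0P y : Vexcess (V xm) y = 0 <-> mu [set x | V xm < V x] = 0%E.
Proof.
set U := [set x | V xm < V x].
have mU : measurable (U : set (borel T)).
  by apply: borel_open_measurable; exact: open_gt_continuous.
have cVm : continuous (fun x => V x - V xm).
  by move=> x; apply: continuousB; [exact: cont_V | exact: cst_continuous].
have cg := @continuous_section _ _ (fun x y => kc eps c x y * (V x - V xm))
  (continuous_kc_weighted cVm) y.
have ig := continuous_integrable cptT mu cg.
rewrite /Vexcess.
have -> : (\int[mu]_x (kc eps c x y * (V x - V xm))%:E =
           \int[mu]_(x in U) (kc eps c x y * (V x - V xm))%:E)%E.
  rewrite [RHS]integral_mkcond; apply: eq_integral => x _; rewrite /patch.
  case: ifPn => // /negP; rewrite in_setE /= => /negP; rewrite -leNgt => Vx.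
  by rewrite (_ : V x = V xm) ?subrr ?mulr0 //; apply/eqP; rewrite eq_le Vx xm_min.
apply: iff_trans (integral_gt0_eq0P _ mU _ _); last 2 first.
- exact: measurable_funS (continuous_borel_measurable cg).
- by move=> x Ux; rewrite mulr_gt0 ?kc_gt0 // subr_gt0.
have Ifin := integrable_fin_num mU (integrableS measurableT mU (subsetT _) ig).
by split => [/eqP|->//]; rewrite fine_eq0 // => /eqP.
Qed.

End at_minimum.

End gibbs_kernel.

Section measure_support.
Context {R : realType} {T : pseudoPMetricType R}.
Variable mu : {measure set (borel T) -> \bar R}.

Lemma msupp_null_open (U : set T) :
  open U -> mu U = 0%E -> forall x, msupp mu x -> ~ U x.
Proof. by move=> oU U0 x /(_ U oU) suppU /suppU; rewrite U0 ltxx. Qed.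

Lemma Binv_eq0P (b : T -> R) (A : set (borel T)) :
  measurable A -> measurable_fun [set: borel T] b -> (forall x, 0 < b x) ->
  Binv mu b A = 0%E <-> mu A = 0%E.
Proof.
by move=> mA mb b_gt0; apply: integral_gt0_eq0P => //; exact: measurable_funS mb.
Qed.

End measure_support.

Theorem mainTheorem16 (R : realType) (T : pseudoPMetricType R)
  (eps : R) (c : T -> T -> R) (V : T -> R)
  (hT : hausdorff_space T) (hcpt : compact [set: T])
  (heps : 0 < eps)
  (hc : continuous (fun p : T * T => c p.1 p.2))
  (hcsym : forall x y, c x y = c y x) (hcge0 : forall x y, 0 <= c x y)
  (hpd : pos_def_kernel (kc eps c)) (huniv : universal_kernel (kc eps c))
  (hV : continuous V)
  (mu : {finite_measure set (borel T) -> \bar R}) (b : T -> R)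
  (hb : b = Hc eps c mu) (hnorm : Hc_sqnorm eps c mu = 1%E) :
  (exists p, Ptilde mu p /\ forall y, Wop eps c V mu b y + p y = 0)
  <-> Binv mu b (~` argmin V) = 0%E.
Proof.
subst b; have [xm xm_min] := compact_argmin hcpt hV.
have Hc_pos := Hc_gt0 hc hcpt hnorm.
have oU := open_gt_continuous (V xm) hV.
have mHc := continuous_borel_measurable (@continuous_Hc _ _ eps c hc hcpt mu).
have excess0P := Vexcess_eq0P eps hc hV hcpt mu xm_min.
have Wop_min := Wop_decomp eps hc hV hcpt mu (V xm).
rewrite (argminC xm_min).
apply: (iff_trans _ (iff_sym (Binv_eq0P mu (borel_open_measurable oU) mHc Hc_pos))).
split.
- move=> [p [[_ [p_le0 _]] Wp0]]; apply/(excess0P xm).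
  have := Wp0 xm; rewrite Wop_min subrr mul0r sub0r mulrN => W.
  have : 2 / eps * Vexcess eps c V mu (V xm) xm <= 0 by have := p_le0 xm; lra.
  rewrite pmulr_rle0 ?divr_gt0 // => E_le0.
  by apply/eqP; rewrite eq_le E_le0 (Vexcess_ge0 eps c mu xm_min).
- move=> U0; have E0 y : Vexcess eps c V mu (V xm) y = 0 by apply/excess0P.
  exists (fun y => - Wop eps c V mu (Hc eps c mu) y); split => [|y]; last by rewrite subrr.
  split; [|split].
  + by move=> y; apply: continuousN; exact: continuous_Wop.
  + move=> y; rewrite oppr_le0 Wop_min E0 subr0.
    by rewrite mulr_ge0 ?divr_ge0 ?mulr_ge0 ?subr_ge0 ?xm_min // ltW ?Hc_pos.
  + move=> y /(msupp_null_open oU U0) /negP; rewrite -leNgt => Vy.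
    have Vy_min : V y = V xm by apply/eqP; rewrite eq_le Vy xm_min.
    by rewrite Wop_min E0 Vy_min subrr mul0r subr0 mulr0 oppr0.
Qed.
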